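(* Let $0<p<1$, $q=1-p$, and let $c$ be the circle centered at the origin with radius $r$, $0<r<\frac{-1+\sqrt{1+4pq}}{2q}$. Let $X=(x_1,\dots,x_N)$, $Y=(y_1,\dots,y_N)\in\mathbb{Z}^N$ with $x_1<\cdots<x_N$, $y_1<\cdots<y_N$ and $x_i\ge y_i$ for all $i$. Let $\sigma\in S_N$, $\sigma\neq\mathrm{Id}$, and for each inversion $(\beta,\alpha)$ of $\sigma$ choose $E_{\beta\alpha}$ to be one of $S_{\beta\alpha},P_{\beta\alpha},Q_{\beta\alpha},pT_{\beta\alpha},qT_{\beta\alpha},0$. Then $$\int_c\cdots\int_c\Big(\prod_{(\beta,\alpha)}E_{\beta\alpha}\Big)\prod_{i=1}^N\xi_{\sigma(i)}^{x_i-y_{\sigma(i)}-1}\,d\xi_1\cdots d\xi_N=0,$$ where the product is over all inversions $(\beta,\alpha)$ of $\sigma$.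
   Context: An inversion of $\sigma$ is a pair $(\beta,\alpha)$ with $\beta>\alpha$ such that $\beta$ appears to the left of $\alpha$ in the word $\sigma(1)\cdots\sigma(N)$. For nonzero complex $\xi_\alpha,\xi_\beta$, with $D=p+q\xi_\alpha\xi_\beta-\xi_\alpha$: $S_{\beta\alpha}=-\frac{p+q\xi_\alpha\xi_\beta-\xi_\beta}{D}$, $P_{\beta\alpha}=\frac{(p-q\xi_\alpha)(\xi_\beta-1)}{D}$, $Q_{\beta\alpha}=\frac{(p-q\xi_\beta)(\xi_\alpha-1)}{D}$, $T_{\beta\alpha}=\frac{\xi_\beta-\xi_\alpha}{D}$. *)

From Stdlib Require Import Reals ZArith List Arith Bool.
From Coquelicot Require Import Coquelicot.
Open Scope R_scope.

Definition Cpowz (z : C) (k : Z) : C :=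
  if (0 <=? k)%Z then Cpow z (Z.to_nat k) else Cinv (Cpow z (Z.to_nat (- k))).

Definition circ_pt (r t : R) : C := (r * cos t, r * sin t).

(** Contour integral over the positively oriented circle |z| = r:
    int_c f(z) dz = int_0^{2 pi} f(r e^{it}) * (i r e^{it}) dt. *)
Definition circ_int (r : R) (f : C -> C) : C :=
  RInt (V := C_R_CompleteNormedModule)
    (fun t => Cmult (f (circ_pt r t)) (Cmult (0, 1) (circ_pt r t))) 0 (2 * PI).

(** Iterated contour integral over c^n of F in the variables xi_0, ..., xi_{n-1};
    xi_0 is the innermost integral (d xi_1 ... d xi_N in the paper's 1-based notation). *)
Fixpoint iter_circ (r : R) (n : nat) (F : (nat -> C) -> C) : C :=
  match n with
  | O => F (fun _ => RtoC 0)
  | S m => circ_int r (fun z =>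
             iter_circ r m (fun xi => F (fun k => if Nat.eqb k m then z else xi k)))
  end.

Section Factors.
Variables (p q : R) (xa xb : C).
Definition Dden : C := Cminus (Cplus (RtoC p) (Cmult (RtoC q) (Cmult xa xb))) xa.
Definition S_f : C :=
  Copp (Cdiv (Cminus (Cplus (RtoC p) (Cmult (RtoC q) (Cmult xa xb))) xb) Dden).
Definition P_f : C :=
  Cdiv (Cmult (Cminus (RtoC p) (Cmult (RtoC q) xa)) (Cminus xb 1)) Dden.
Definition Q_f : C :=
  Cdiv (Cmult (Cminus (RtoC p) (Cmult (RtoC q) xb)) (Cminus xa 1)) Dden.
Definition T_f : C := Cdiv (Cminus xb xa) Dden.
End Factors.

Inductive Echoice := ES | EP | EQ | EpT | EqT | E0.

Definition Eval (p q : R) (e : Echoice) (xa xb : C) : C :=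
  match e with
  | ES => S_f p q xa xb
  | EP => P_f p q xa xb
  | EQ => Q_f p q xa xb
  | EpT => Cmult (RtoC p) (T_f p q xa xb)
  | EqT => Cmult (RtoC q) (T_f p q xa xb)
  | E0 => RtoC 0
  end.

Definition Cprod (l : list C) : C := fold_right Cmult (RtoC 1) l.

(** An inversion is a pair beta > alpha with beta to the left of alpha
    in the word sigma(0) ... sigma(N-1), i.e. beta = sigma i, alpha = sigma j with
    i < j and sigma i > sigma j; this is a bijection between such position pairs
    and inversions. *)
Definition inv_prod (N : nat) (sigma : nat -> nat) (G : nat -> nat -> C) : C :=
  Cprod (flat_map (fun i =>
           map (fun j => if andb (Nat.ltb i j) (Nat.ltb (sigma j) (sigma i))
                         then G (sigma i) (sigma j) else RtoC 1)
               (seq 0 N))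
         (seq 0 N)).

Definition is_perm (N : nat) (sigma : nat -> nat) : Prop :=
  (forall i, (i < N)%nat -> (sigma i < N)%nat) /\
  (forall i j, (i < N)%nat -> (j < N)%nat -> sigma i = sigma j -> i = j).

From Stdlib Require Import Reals ZArith List Arith Lia Lra FunctionalExtensionality.
From Coquelicot Require Import Coquelicot.
Open Scope R_scope.

(* Let m be the smallest index moved by sigma.  Then sigma preserves {m, ..., N-1}, every
   inversion (beta, alpha) has alpha >= m and beta > m, and xi_m occurs in the power factors
   only with exponent x_i - y_m - 1 >= 0, where sigma(i) = m and i > m.  The variables
   xi_0, ..., xi_{m-1} (integrated first) occur in separate power factors only, so their
   integrals split off as a constant.  As a function of xi_m, with the later variables on c,
   each factor E_{beta m} is (c0 + c1 xi_m) / (p + (q xi_beta - 1) xi_m), and the bound on r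
   is exactly q r^2 + r < p, which keeps this denominator away from 0 on the closed disc.
   The integrand is then a uniform limit on c of polynomials in xi_m (truncated geometric
   series), so its xi_m-integral vanishes, and the outer integrals are integrals of 0. *)

(* [ring] and [field] need the equation typed at C rather than R * R, with Ci as one atom. *)
Ltac change_to_C := match goal with |- ?a = ?b => change (@eq C a b) end; fold Ci.

Lemma Cmod_circ_pt (r t : R) : 0 <= r -> Cmod (circ_pt r t) = r.
Proof.
  intros Hr. unfold Cmod, circ_pt; simpl.
  replace (r * cos t * (r * cos t * 1) + r * sin t * (r * sin t * 1))
    with (r ^ 2 * (Rsqr (sin t) + Rsqr (cos t))) by (unfold Rsqr; ring).
  rewrite sin2_cos2, Rmult_1_r. apply sqrt_pow2; exact Hr.
Qed.

Lemma circ_pt_mult (a b s t : R) :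
  Cmult (circ_pt a s) (circ_pt b t) = circ_pt (a * b) (s + t).
Proof.
  unfold circ_pt, Cmult. rewrite cos_plus, sin_plus.
  apply injective_projections; simpl; ring.
Qed.

Lemma Cpow_circ_pt (r t : R) (n : nat) : Cpow (circ_pt r t) n = circ_pt (r ^ n) (INR n * t).
Proof.
  induction n as [|n IH]; simpl Cpow.
  - unfold circ_pt. rewrite Rmult_0_l, cos_0, sin_0.
    apply injective_projections; simpl; ring.
  - rewrite IH, circ_pt_mult, S_INR. f_equal; ring.
Qed.

Lemma Cinv_circ_pt (a t : R) : a <> 0 -> Cinv (circ_pt a t) = circ_pt (/ a) (- t).
Proof.
  intros Ha. unfold Cinv, circ_pt. cbn [fst snd]. rewrite cos_neg, sin_neg.
  assert (Hmod : (a * cos t) ^ 2 + (a * sin t) ^ 2 = a ^ 2).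
  { rewrite <- (Rmult_1_r (a ^ 2)), <- (sin2_cos2 t). unfold Rsqr. ring. }
  rewrite Hmod.
  apply injective_projections; cbn [fst snd]; field; exact Ha.
Qed.

Lemma Cpowz_circ_pt (r t : R) (k : Z) :
  r <> 0 -> Cpowz (circ_pt r t) k = circ_pt (powerRZ r k) (IZR k * t).
Proof.
  intros Hr. unfold Cpowz.
  destruct k as [|n|n]; cbn [Z.leb Z.compare].
  - simpl. rewrite Rmult_0_l. unfold circ_pt. rewrite cos_0, sin_0.
    apply injective_projections; simpl; ring.
  - rewrite Z2Nat.inj_pos, Cpow_circ_pt, INR_IPR. reflexivity.
  - change (- Z.neg n)%Z with (Z.pos n).
    rewrite Z2Nat.inj_pos, Cpow_circ_pt, Cinv_circ_pt, INR_IPR by (apply pow_nonzero; exact Hr).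
    simpl powerRZ. f_equal. change (IZR (Z.neg n)) with (- IPR n). ring.
Qed.

Lemma is_RInt_Cmult_l (h : R -> C) (a b : R) (c I : C) :
  is_RInt (V := C_R_CompleteNormedModule) h a b I ->
  is_RInt (V := C_R_CompleteNormedModule) (fun t => Cmult c (h t)) a b (Cmult c I).
Proof.
  intros H. destruct c as [c1 c2].
  pose proof (is_RInt_fct_extend_fst (U := R_NormedModule) (V := R_NormedModule) h a b I H) as H1.
  pose proof (is_RInt_fct_extend_snd (U := R_NormedModule) (V := R_NormedModule) h a b I H) as H2.
  apply (is_RInt_fct_extend_pair (U := R_NormedModule) (V := R_NormedModule)); cbn [Cmult fst snd].
  - apply (is_RInt_minus (V := R_NormedModule)); apply (is_RInt_scal (V := R_NormedModule)); assumption.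
  - apply (is_RInt_plus (V := R_NormedModule)); apply (is_RInt_scal (V := R_NormedModule)); assumption.
Qed.

Lemma is_RInt_circ_pt_harmonic (a : R) (n : nat) :
  is_RInt (V := C_R_CompleteNormedModule) (fun t => circ_pt a (INR (S n) * t)) 0 (2 * PI) (RtoC 0).
Proof.
  set (c := INR (S n)).
  assert (Hc : c <> 0) by (apply not_0_INR; lia).
  assert (Hperiod : c * (2 * PI) = 0 + 2 * c * PI) by ring.
  apply (is_RInt_fct_extend_pair (U := R_NormedModule) (V := R_NormedModule));
    unfold circ_pt; cbn [fst snd RtoC].
  - assert (Hval : minus (a * sin (c * (2 * PI)) / c) (a * sin (c * 0) / c) = 0).
    { rewrite Hperiod; unfold c at 1; rewrite sin_period, Rmult_0_r, sin_0.
      unfold minus, plus, opp; simpl. field. exact Hc. }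
    rewrite <- Hval at 2.
    apply (is_RInt_derive (V := R_CompleteNormedModule) (fun t => a * sin (c * t) / c)).
    + intros t _. auto_derive; [exact I|]. field. exact Hc.
    + intros t _. apply (ex_derive_continuous (K := R_AbsRing) (V := R_NormedModule)).
      auto_derive. exact I.
  - assert (Hval : minus (- a * cos (c * (2 * PI)) / c) (- a * cos (c * 0) / c) = 0).
    { rewrite Hperiod; unfold c at 1; rewrite cos_period, Rmult_0_r.
      unfold minus, plus, opp; simpl. field. exact Hc. }
    rewrite <- Hval at 2.
    apply (is_RInt_derive (V := R_CompleteNormedModule) (fun t => - a * cos (c * t) / c)).
    + intros t _. auto_derive; [exact I|]. field. exact Hc.
    + intros t _. apply (ex_derive_continuous (K := R_AbsRing) (V := R_NormedModule)).
      auto_derive. exact I.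
Qed.

Lemma ex_RInt_circ_pt_linear (a c x y : R) :
  ex_RInt (V := C_R_CompleteNormedModule) (fun t => circ_pt a (c * t)) x y.
Proof.
  apply (ex_RInt_fct_extend_pair (U := R_NormedModule) (V := R_NormedModule));
    apply (ex_RInt_continuous (V := R_CompleteNormedModule)); intros t _;
    apply (ex_derive_continuous (K := R_AbsRing) (V := R_NormedModule)); unfold circ_pt; simpl;
    auto_derive; exact I.
Qed.

Definition circ_integrand (r : R) (f : C -> C) (t : R) : C :=
  Cmult (f (circ_pt r t)) (Cmult Ci (circ_pt r t)).

Lemma circ_integrand_Cpowz (r : R) (k : Z) (t : R) : r <> 0 ->
  circ_integrand r (fun z => Cpowz z k) t
  = Cmult Ci (circ_pt (powerRZ r k * r) ((IZR k + 1) * t)).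
Proof.
  intros Hr. unfold circ_integrand. rewrite Cpowz_circ_pt by exact Hr.
  replace ((IZR k + 1) * t) with (IZR k * t + t) by ring.
  rewrite <- circ_pt_mult. change_to_C. ring.
Qed.

Lemma is_RInt_circ_monomial (r : R) (n : nat) :
  is_RInt (V := C_R_CompleteNormedModule) (circ_integrand r (fun z => Cpow z n)) 0 (2 * PI) (RtoC 0).
Proof.
  apply (is_RInt_ext (V := C_R_CompleteNormedModule)
           (fun t => Cmult Ci (circ_pt (r ^ n * r) (INR (S n) * t)))).
  { intros t _. unfold circ_integrand. rewrite Cpow_circ_pt, S_INR.
    replace ((INR n + 1) * t) with (INR n * t + t) by ring.
    rewrite <- circ_pt_mult. change_to_C. ring. }
  replace (RtoC 0) with (Cmult Ci (RtoC 0)) by (change_to_C; ring).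
  apply is_RInt_Cmult_l, is_RInt_circ_pt_harmonic.
Qed.

Lemma ex_RInt_circ_Cpowz (r : R) (k : Z) : r <> 0 ->
  ex_RInt (V := C_R_CompleteNormedModule) (circ_integrand r (fun z => Cpowz z k)) 0 (2 * PI).
Proof.
  intros Hr. destruct (ex_RInt_circ_pt_linear (powerRZ r k * r) (IZR k + 1) 0 (2 * PI)) as [I HI].
  exists (Cmult Ci I).
  apply (is_RInt_ext (V := C_R_CompleteNormedModule)
           (fun t => Cmult Ci (circ_pt (powerRZ r k * r) ((IZR k + 1) * t)))).
  - intros t _. symmetry. apply circ_integrand_Cpowz, Hr.
  - apply is_RInt_Cmult_l, HI.
Qed.

Lemma circ_int_Cmult_l (r : R) (c : C) (f : C -> C) (I : C) :
  is_RInt (V := C_R_CompleteNormedModule) (circ_integrand r f) 0 (2 * PI) I ->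
  circ_int r (fun z => Cmult c (f z)) = Cmult c I.
Proof.
  intros HI. apply (is_RInt_unique (V := C_R_CompleteNormedModule)).
  apply (is_RInt_ext (V := C_R_CompleteNormedModule) (fun t => Cmult c (circ_integrand r f t))).
  - intros t _. unfold circ_integrand. change_to_C. ring.
  - apply is_RInt_Cmult_l, HI.
Qed.

Lemma circ_int_eq0 (r : R) (f : C -> C) :
  (forall t, f (circ_pt r t) = RtoC 0) -> circ_int r f = RtoC 0.
Proof.
  intros Hf. unfold circ_int.
  rewrite (RInt_ext (V := C_R_CompleteNormedModule) _ (fun _ => RtoC 0)).
  - rewrite RInt_const. apply (scal_zero_r (K := R_AbsRing) (V := C_R_CompleteNormedModule)).
  - intros t _. rewrite Hf. change_to_C. ring.
Qed.

Section Polynomials.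
Local Open Scope C_scope.

Fixpoint peval (P : list C) (w : C) : C :=
  match P with nil => RtoC 0 | a :: P' => a + w * peval P' w end.

Fixpoint padd (P Q : list C) : list C :=
  match P, Q with
  | nil, _ => Q
  | _, nil => P
  | a :: P', b :: Q' => (a + b) :: padd P' Q'
  end.

Definition pscal (c : C) (P : list C) : list C := map (fun a => c * a) P.

Fixpoint pmul (P Q : list C) : list C :=
  match P with nil => nil | a :: P' => padd (pscal a Q) (RtoC 0 :: pmul P' Q) end.

Lemma peval_padd (P Q : list C) (w : C) : peval (padd P Q) w = peval P w + peval Q w.
Proof.
  revert Q; induction P as [|a P IH]; intros Q; simpl.
  - ring.
  - destruct Q as [|b Q]; simpl; [|rewrite IH]; ring.
Qed.

Lemma peval_pscal (c : C) (P : list C) (w : C) : peval (pscal c P) w = c * peval P w.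
Proof. induction P as [|a P IH]; simpl; [|rewrite IH]; ring. Qed.

Lemma peval_pmul (P Q : list C) (w : C) : peval (pmul P Q) w = peval P w * peval Q w.
Proof.
  induction P as [|a P IH]; simpl; [ring|].
  rewrite peval_padd, peval_pscal. simpl. rewrite IH. ring.
Qed.

Lemma peval_bounded (r : R) (P : list C) : (0 <= r)%R ->
  exists B, (0 <= B)%R /\ forall w, Cmod w = r -> (Cmod (peval P w) <= B)%R.
Proof.
  intros Hr. induction P as [|a P [B [HB0 HB]]]; simpl.
  - exists 0%R. split; [lra|]. intros w _. rewrite Cmod_0. lra.
  - exists (Cmod a + r * B)%R. split.
    + pose proof (Cmod_ge_0 a). nra.
    + intros w Hw. eapply Rle_trans; [apply Cmod_triangle|].
      rewrite Cmod_mult, Hw. apply Rplus_le_compat_l, Rmult_le_compat_l; auto.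
Qed.

Lemma is_RInt_circ_peval_monomial (r : R) (P : list C) (n : nat) :
  is_RInt (V := C_R_CompleteNormedModule)
    (circ_integrand r (fun z => peval P z * Cpow z n)) 0 (2 * PI) (RtoC 0).
Proof.
  revert n; induction P as [|a P IH]; intros n; simpl peval.
  - pose proof (is_RInt_Cmult_l _ _ _ (RtoC 0) _ (is_RInt_circ_monomial r n)) as H0.
    rewrite Cmult_0_l in H0.
    refine (is_RInt_ext (V := C_R_CompleteNormedModule) _ _ _ _ _ _ H0).
    intros t _. unfold circ_integrand. change_to_C. ring.
  - pose proof (is_RInt_plus (V := C_R_CompleteNormedModule) _ _ _ _ _ _
                  (is_RInt_Cmult_l _ _ _ a _ (is_RInt_circ_monomial r n)) (IH (S n))) as H0.
    rewrite Cmult_0_r in H0. unfold plus in H0. simpl in H0. rewrite Cplus_0_l in H0.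
    refine (is_RInt_ext (V := C_R_CompleteNormedModule) _ _ _ _ _ _ H0).
    intros t _. unfold circ_integrand. change (prod_plus ?x ?y) with (Cplus x y). change_to_C. ring.
Qed.

Lemma is_RInt_circ_peval (r : R) (P : list C) :
  is_RInt (V := C_R_CompleteNormedModule) (circ_integrand r (peval P)) 0 (2 * PI) (RtoC 0).
Proof.
  apply (is_RInt_ext (V := C_R_CompleteNormedModule)
           (circ_integrand r (fun z => peval P z * Cpow z 0))).
  - intros t _. unfold circ_integrand. simpl. change_to_C. ring.
  - apply is_RInt_circ_peval_monomial.
Qed.

End Polynomials.

Lemma Cprod_app (l1 l2 : list C) : Cprod (l1 ++ l2) = Cmult (Cprod l1) (Cprod l2).
Proof. induction l1 as [|a l IH]; simpl; [|rewrite IH]; change_to_C; ring. Qed.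

Lemma Cmod_sub_le (a b : C) : Cmod (Cminus a b) <= Cmod a + Cmod b.
Proof. unfold Cminus. rewrite <- (Cmod_opp b). apply Cmod_triangle. Qed.

Lemma Cmod_affine_ge (c d w : C) :
  Cmod c - Cmod d * Cmod w <= Cmod (Cplus c (Cmult d w)).
Proof.
  pose proof (Cmod_sub_le (Cplus c (Cmult d w)) (Cmult d w)) as H.
  replace (Cminus (Cplus c (Cmult d w)) (Cmult d w)) with c in H by (change_to_C; ring).
  rewrite Cmod_mult in H. lra.
Qed.

Section PolyApprox.
Local Open Scope C_scope.
Variable r : R.
Hypothesis Hr : (0 <= r)%R.

Definition poly_approx (f : C -> C) : Prop :=
  forall eps, (0 < eps)%R ->
  exists P, forall w, Cmod w = r -> (Cmod (f w - peval P w) <= eps)%R.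

Lemma poly_approx_bounded (f : C -> C) : poly_approx f ->
  exists B, (0 <= B)%R /\ forall w, Cmod w = r -> (Cmod (f w) <= B)%R.
Proof.
  intros Hf. destruct (Hf 1%R Rlt_0_1) as [P HP].
  destruct (peval_bounded r P Hr) as [B [HB0 HB]].
  exists (1 + B)%R. split; [lra|]. intros w Hw.
  replace (f w) with ((f w - peval P w) + peval P w) by ring.
  eapply Rle_trans; [apply Cmod_triangle|].
  apply Rplus_le_compat; auto.
Qed.

Lemma poly_approx_ext (f g : C -> C) :
  poly_approx f -> (forall w, Cmod w = r -> f w = g w) -> poly_approx g.
Proof.
  intros Hf Hfg eps Heps. destruct (Hf eps Heps) as [P HP].
  exists P. intros w Hw. rewrite <- Hfg by exact Hw. auto.
Qed.

Lemma poly_approx_peval (P : list C) : poly_approx (peval P).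
Proof.
  intros eps Heps. exists P. intros w _.
  replace (peval P w - peval P w) with (RtoC 0) by ring. rewrite Cmod_0. lra.
Qed.

Lemma poly_approx_const (c : C) : poly_approx (fun _ => c).
Proof.
  apply (poly_approx_ext (peval (c :: nil))); [apply poly_approx_peval|].
  intros w _. simpl. ring.
Qed.

Lemma poly_approx_id : poly_approx (fun w => w).
Proof.
  apply (poly_approx_ext (peval (RtoC 0 :: RtoC 1 :: nil))); [apply poly_approx_peval|].
  intros w _. simpl. ring.
Qed.

Lemma poly_approx_add (f g : C -> C) :
  poly_approx f -> poly_approx g -> poly_approx (fun w => f w + g w).
Proof.
  intros Hf Hg eps Heps.
  destruct (Hf (eps / 2)%R) as [P HP]; [lra|].
  destruct (Hg (eps / 2)%R) as [Q HQ]; [lra|].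
  exists (padd P Q). intros w Hw. rewrite peval_padd.
  replace (f w + g w - (peval P w + peval Q w)) with ((f w - peval P w) + (g w - peval Q w)) by ring.
  eapply Rle_trans; [apply Cmod_triangle|].
  specialize (HP w Hw); specialize (HQ w Hw); lra.
Qed.

Lemma poly_approx_mul (f g : C -> C) :
  poly_approx f -> poly_approx g -> poly_approx (fun w => f w * g w).
Proof.
  intros Hf Hg eps Heps.
  destruct (poly_approx_bounded f Hf) as [Bf [HBf0 HBf]].
  destruct (poly_approx_bounded g Hg) as [Bg [HBg0 HBg]].
  set (eg := Rmin 1 (eps / (2 * (Bf + 1)))).
  set (ef := (eps / (2 * (Bg + 1)))%R).
  assert (Heg : (0 < eg)%R) by (apply Rmin_glb_lt; [lra | apply Rdiv_lt_0_compat; lra]).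
  assert (Heg1 : (eg <= 1)%R) by apply Rmin_l.
  assert (HegB : (Bf * eg <= eps / 2)%R).
  { apply Rle_trans with ((Bf + 1) * (eps / (2 * (Bf + 1))))%R.
    - apply Rmult_le_compat; try lra. apply Rmin_r.
    - right. field. lra. }
  assert (Hef : (0 < ef)%R) by (apply Rdiv_lt_0_compat; lra).
  assert (HefB : (ef * (Bg + 1) = eps / 2)%R) by (unfold ef; field; lra).
  destruct (Hf ef Hef) as [P HP]. destruct (Hg eg Heg) as [Q HQ].
  exists (pmul P Q). intros w Hw. rewrite peval_pmul.
  specialize (HP w Hw); specialize (HQ w Hw); specialize (HBf w Hw); specialize (HBg w Hw).
  assert (HQw : (Cmod (peval Q w) <= Bg + 1)%R).
  { replace (peval Q w) with (g w - (g w - peval Q w)) by ring.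
    eapply Rle_trans; [apply Cmod_sub_le | lra]. }
  replace (f w * g w - peval P w * peval Q w)
    with (f w * (g w - peval Q w) + (f w - peval P w) * peval Q w) by ring.
  eapply Rle_trans; [apply Cmod_triangle|]. rewrite !Cmod_mult.
  assert (T1 : (Cmod (f w) * Cmod (g w - peval Q w) <= Bf * eg)%R)
    by (apply Rmult_le_compat; auto; apply Cmod_ge_0).
  assert (T2 : (Cmod (f w - peval P w) * Cmod (peval Q w) <= ef * (Bg + 1))%R)
    by (apply Rmult_le_compat; auto; apply Cmod_ge_0).
  lra.
Qed.

Lemma poly_approx_pow (n : nat) : poly_approx (fun w => Cpow w n).
Proof.
  induction n as [|n IH]; simpl.
  - apply poly_approx_const.
  - apply (poly_approx_mul (fun w => w)); [apply poly_approx_id | exact IH].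
Qed.

Lemma poly_approx_Cprod_map (l : list nat) (h : nat -> C -> C) :
  (forall i, In i l -> poly_approx (h i)) ->
  poly_approx (fun w => Cprod (map (fun i => h i w) l)).
Proof.
  induction l as [|a l IH]; intros Hh; simpl.
  - apply poly_approx_const.
  - apply (poly_approx_mul (h a)); [apply Hh; left; reflexivity|].
    apply IH. intros i Hi. apply Hh. right. exact Hi.
Qed.

Lemma poly_approx_Cprod_flat_map (l1 l2 : list nat) (h : nat -> nat -> C -> C) :
  (forall i j, In i l1 -> In j l2 -> poly_approx (h i j)) ->
  poly_approx (fun w => Cprod (flat_map (fun i => map (fun j => h i j w) l2) l1)).
Proof.
  induction l1 as [|a l1 IH]; intros Hh; simpl.
  - apply poly_approx_const.
  - apply (poly_approx_ext (fun w => Cprod (map (fun j => h a j w) l2)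
                                    * Cprod (flat_map (fun i => map (fun j => h i j w) l2) l1))).
    + apply poly_approx_mul.
      * apply poly_approx_Cprod_map. intros j Hj. apply Hh; [left; reflexivity | exact Hj].
      * apply IH. intros i j Hi Hj. apply Hh; [right; exact Hi | exact Hj].
    + intros w _. symmetry. apply Cprod_app.
Qed.

Lemma poly_approx_inv_prod (N : nat) (sigma : nat -> nat) (G : nat -> nat -> C -> C) :
  (forall i j, (i < j < N)%nat -> (sigma j < sigma i)%nat -> poly_approx (G (sigma i) (sigma j))) ->
  poly_approx (fun w => inv_prod N sigma (fun b a => G b a w)).
Proof.
  intros HG. unfold inv_prod.
  apply (poly_approx_Cprod_flat_map (seq 0 N) (seq 0 N) (fun i j w =>
           if andb (Nat.ltb i j) (Nat.ltb (sigma j) (sigma i)) then G (sigma i) (sigma j) w else RtoC 1)).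
  intros i j Hi Hj. apply in_seq in Hi, Hj.
  destruct (Nat.ltb_spec i j), (Nat.ltb_spec (sigma j) (sigma i)); simpl;
    try apply poly_approx_const.
  apply HG; lia.
Qed.

Fixpoint geom_poly (c d : C) (M : nat) : list C :=
  match M with O => nil | S M' => (/ c) :: pscal (- d / c) (geom_poly c d M') end.

Lemma geom_poly_spec (c d w : C) (M : nat) : c <> RtoC 0 ->
  (c + d * w) * peval (geom_poly c d M) w = RtoC 1 - Cpow (- d * w / c) M.
Proof.
  intros Hc. induction M as [|M IH]; simpl; [ring|].
  rewrite peval_pscal.
  replace ((c + d * w) * (/ c + w * (- d / c * peval (geom_poly c d M) w)))
    with ((c + d * w) / c + (- d * w / c) * ((c + d * w) * peval (geom_poly c d M) w))
    by (field; exact Hc).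
  rewrite IH. field. exact Hc.
Qed.

Lemma poly_approx_inv_affine (c d : C) :
  (Cmod d * r < Cmod c)%R -> poly_approx (fun w => / (c + d * w)).
Proof.
  intros Hdc eps Heps.
  assert (Hd0 : (0 <= Cmod d * r)%R) by (apply Rmult_le_pos; [apply Cmod_ge_0 | exact Hr]).
  assert (Hc : c <> RtoC 0) by (intros E; rewrite E, Cmod_0 in Hdc; lra).
  assert (Hlow : forall w, Cmod w = r -> (Cmod c - Cmod d * r <= Cmod (c + d * w))%R)
    by (intros w Hw; rewrite <- Hw; apply Cmod_affine_ge).
  assert (Hnz : forall w, Cmod w = r -> c + d * w <> RtoC 0).
  { intros w Hw E. specialize (Hlow w Hw). rewrite E, Cmod_0 in Hlow. lra. }
  set (B := (/ (Cmod c - Cmod d * r))%R).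
  assert (HB : (0 < B)%R) by (apply Rinv_0_lt_compat; lra).
  assert (Hinv : forall w, Cmod w = r -> (Cmod (/ (c + d * w)) <= B)%R).
  { intros w Hw. rewrite Cmod_inv by (apply Hnz, Hw).
    apply Rinv_le_contravar; [lra | apply Hlow, Hw]. }
  set (th := (Cmod d * r / Cmod c)%R).
  assert (Hth0 : (0 <= th)%R) by (apply Rdiv_le_0_compat; lra).
  assert (Hth1 : (Rabs th < 1)%R).
  { rewrite Rabs_pos_eq by exact Hth0. unfold th.
    apply (Rmult_lt_reg_r (Cmod c)); [lra|]. field_simplify; lra. }
  destruct (pow_lt_1_zero th Hth1 (eps / B)%R) as [M HM]; [apply Rdiv_lt_0_compat; lra|].
  exists (geom_poly c d M). intros w Hw.
  assert (Herr : / (c + d * w) - peval (geom_poly c d M) w = Cpow (- d * w / c) M / (c + d * w)).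
  { pose proof (geom_poly_spec c d w M Hc) as G. pose proof (Hnz w Hw) as Hw0.
    replace (peval (geom_poly c d M) w) with ((RtoC 1 - Cpow (- d * w / c) M) / (c + d * w))
      by (rewrite <- G; field; exact Hw0).
    field. exact Hw0. }
  rewrite Herr. unfold Cdiv. rewrite Cmod_mult, Cmod_pow.
  assert (Hratio : Cmod (- d * w * / c) = th).
  { unfold th. rewrite Cmod_mult, Cmod_inv, Cmod_mult, Cmod_opp, Hw by exact Hc. reflexivity. }
  rewrite Hratio.
  specialize (HM M (le_n M)). rewrite Rabs_pos_eq in HM by (apply pow_le, Hth0).
  apply Rle_trans with (eps / B * B)%R.
  - apply Rmult_le_compat; [apply pow_le, Hth0 | apply Cmod_ge_0 | lra | apply Hinv, Hw].
  - right. field. lra.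
Qed.

End PolyApprox.

(* The filter of ever better polynomial approximations of f on the circle, along which
   [filterlim_RInt] passes the (zero) integrals of the approximants to the limit f. *)
Definition approx_filter (r : R) (f : C -> C) (S : list C -> Prop) : Prop :=
  exists eps, 0 < eps /\
  forall P, (forall w, Cmod w = r -> Cmod (Cminus (f w) (peval P w)) <= eps) -> S P.

Lemma approx_filter_proper (r : R) (f : C -> C) :
  poly_approx r f -> ProperFilter (approx_filter r f).
Proof.
  intros Hf. constructor.
  - intros S [eps [Heps HS]]. destruct (Hf eps Heps) as [P HP]. exists P. apply HS, HP.
  - constructor.
    + exists 1. split; [lra | auto].
    + intros S1 S2 [e1 [He1 H1]] [e2 [He2 H2]]. exists (Rmin e1 e2).
      split; [apply Rmin_glb_lt; assumption|].
      intros P HP. split.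
      * apply H1. intros w Hw. eapply Rle_trans; [apply HP, Hw | apply Rmin_l].
      * apply H2. intros w Hw. eapply Rle_trans; [apply HP, Hw | apply Rmin_r].
    + intros S1 S2 Himp [eps [Heps H]]. exists eps. split; auto.
Qed.

Lemma is_RInt_circ_poly_approx (r : R) (f : C -> C) : 0 < r -> poly_approx r f ->
  is_RInt (V := C_R_CompleteNormedModule) (circ_integrand r f) 0 (2 * PI) (RtoC 0).
Proof.
  intros Hr Hf.
  pose proof (approx_filter_proper r f Hf) as HF.
  destruct (filterlim_RInt (V := C_R_CompleteNormedModule)
              (fun P => circ_integrand r (peval P)) 0 (2 * PI) (approx_filter r f) HF
              (circ_integrand r f) (fun _ => RtoC 0) (is_RInt_circ_peval r))
    as [I [HlimI HI]].
  - intros S [eps HS]. exists (eps / (2 * r)). split.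
    { apply Rdiv_lt_0_compat; [apply cond_pos | lra]. }
    intros P HP. apply HS. intros t.
    apply (norm_compat1 (K := R_AbsRing) (V := C_R_NormedModule)).
    rewrite <- Cmod_norm.
    match goal with |- Cmod ?d < _ => replace d with (Copp (Cmult (Cminus (f (circ_pt r t)) (peval P (circ_pt r t))) (Cmult Ci (circ_pt r t)))) end.
    2: { unfold circ_integrand, minus, plus, opp. simpl.
         change (prod_plus ?a (prod_opp ?b)) with (Cplus a (Copp b)). change_to_C. ring. }
    rewrite Cmod_opp, !Cmod_mult, Cmod_circ_pt by lra.
    rewrite Cmod_Ci.
    pose proof (HP (circ_pt r t) (Cmod_circ_pt r t (Rlt_le _ _ Hr))) as Hclose.
    pose proof (cond_pos eps) as Heps.
    apply Rle_lt_trans with (eps / (2 * r) * (1 * r)).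
    + apply Rmult_le_compat_r; lra.
    + replace (eps / (2 * r) * (1 * r)) with (eps / 2) by (field; lra). lra.
  - replace (RtoC 0) with I; [exact HI|].
    apply (filterlim_locally_unique (K := R_AbsRing) (V := C_R_NormedModule)
             (FF := Proper_StrongProper _ HF) (fun _ => RtoC 0)); [exact HlimI|].
    apply filterlim_const.
Qed.

Lemma iter_circ_separable (r : R) (g : nat -> C -> C) :
  (forall i, ex_RInt (V := C_R_CompleteNormedModule) (circ_integrand r (g i)) 0 (2 * PI)) ->
  forall n c, iter_circ r n (fun xi => Cmult (Cprod (map (fun i => g i (xi i)) (seq 0 n))) c)
              = Cmult (Cprod (map (fun i => circ_int r (g i)) (seq 0 n))) c.
Proof.
  intros Hg n. induction n as [|n IH]; intros c; [reflexivity|].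
  set (K := Cprod (map (fun i => circ_int r (g i)) (seq 0 n))).
  destruct (Hg n) as [I HI].
  rewrite seq_S, !map_app, Cprod_app. simpl. fold K.
  replace (circ_int r (g n)) with I
    by (symmetry; apply (is_RInt_unique (V := C_R_CompleteNormedModule)), HI).
  transitivity (circ_int r (fun z => Cmult (Cmult K c) (g n z))).
  - f_equal. apply functional_extensionality. intros z.
    replace (Cmult K c * g n z)%C with (Cmult K (Cmult (g n z) c)) by (change_to_C; ring).
    rewrite <- IH. f_equal. apply functional_extensionality. intros xi.
    rewrite map_app, Cprod_app. simpl. rewrite Nat.eqb_refl.
    rewrite (map_ext_in _ (fun i => g i (xi i))).
    + change_to_C. ring.
    + intros i Hi. apply in_seq in Hi. destruct (Nat.eqb_spec i n); [lia | reflexivity].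
  - rewrite (circ_int_Cmult_l r _ _ _ HI). change_to_C. ring.
Qed.

(* [iter_circ r n] sets the coordinates >= n to 0; [mix n _ env] freezes them at [env]. *)
Definition mix (n : nat) (xi env : nat -> C) : nat -> C :=
  fun k => if Nat.ltb k n then xi k else env k.

Lemma iter_circ_mix_S (r : R) (n : nat) (F : (nat -> C) -> C) (env : nat -> C) :
  iter_circ r (S n) (fun xi => F (mix (S n) xi env)) =
  circ_int r (fun z => iter_circ r n (fun xi => F (mix n xi (fun k => if Nat.eqb k n then z else env k)))).
Proof.
  simpl. f_equal. apply functional_extensionality. intros z. f_equal.
  apply functional_extensionality. intros xi. f_equal.
  apply functional_extensionality. intros k. unfold mix.
  destruct (Nat.ltb_spec k (S n)), (Nat.eqb_spec k n), (Nat.ltb_spec k n); auto; lia.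
Qed.

Lemma iter_circ_mix_eq0 (r : R) (F : (nat -> C) -> C) (m : nat) : 0 <= r ->
  (forall env, (forall k, (m <= k)%nat -> Cmod (env k) = r) ->
     iter_circ r m (fun xi => F (mix m xi env)) = RtoC 0) ->
  forall n, (m <= n)%nat -> forall env, (forall k, (n <= k)%nat -> Cmod (env k) = r) ->
     iter_circ r n (fun xi => F (mix n xi env)) = RtoC 0.
Proof.
  intros Hr Hm n Hmn. induction Hmn as [|n Hmn IH]; intros env Henv; [apply Hm, Henv|].
  rewrite iter_circ_mix_S. apply circ_int_eq0. intros t. apply IH.
  intros k Hk. destruct (Nat.eqb_spec k n); [apply Cmod_circ_pt, Hr | apply Henv; lia].
Qed.

Definition integrand (p : R) (N : nat) (X Y : nat -> Z) (sigma : nat -> nat)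
  (E : nat -> nat -> Echoice) (xi : nat -> C) : C :=
  Cmult (inv_prod N sigma (fun b a => Eval p (1 - p) (E b a) (xi a) (xi b)))
        (Cprod (map (fun i => Cpowz (xi (sigma i)) (X i - Y (sigma i) - 1)%Z) (seq 0 N))).

Definition integrand_tail (p : R) (N m : nat) (X Y : nat -> Z) (sigma : nat -> nat)
  (E : nat -> nat -> Echoice) (xi : nat -> C) : C :=
  Cmult (inv_prod N sigma (fun b a => Eval p (1 - p) (E b a) (xi a) (xi b)))
        (Cprod (map (fun i => Cpowz (xi (sigma i)) (X i - Y (sigma i) - 1)%Z) (seq m (N - m)))).

Lemma inv_prod_ext (N : nat) (sigma : nat -> nat) (G1 G2 : nat -> nat -> C) :
  (forall i j, (i < j < N)%nat -> (sigma j < sigma i)%nat ->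
     G1 (sigma i) (sigma j) = G2 (sigma i) (sigma j)) ->
  inv_prod N sigma G1 = inv_prod N sigma G2.
Proof.
  intros H. unfold inv_prod. f_equal. rewrite !flat_map_concat_map. f_equal.
  apply map_ext_in. intros i Hi. apply map_ext_in. intros j Hj.
  apply in_seq in Hi, Hj.
  destruct (Nat.ltb_spec i j), (Nat.ltb_spec (sigma j) (sigma i)); simpl; auto.
  apply H; lia.
Qed.

Lemma integrand_mix (p : R) (N : nat) (X Y : nat -> Z) (sigma : nat -> nat)
  (E : nat -> nat -> Echoice) (xi env : nat -> C) :
  (forall i, (i < N)%nat -> (sigma i < N)%nat) ->
  integrand p N X Y sigma E (mix N xi env) = integrand p N X Y sigma E xi.
Proof.
  intros Hs. unfold integrand, mix. f_equal.
  - apply inv_prod_ext. intros i j Hij _.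
    pose proof (Hs i ltac:(lia)); pose proof (Hs j ltac:(lia)).
    destruct (Nat.ltb_spec (sigma j) N), (Nat.ltb_spec (sigma i) N); auto; lia.
  - f_equal. apply map_ext_in. intros i Hi. apply in_seq in Hi.
    pose proof (Hs i ltac:(lia)). destruct (Nat.ltb_spec (sigma i) N); auto; lia.
Qed.

Lemma Eval_affine_ratio (p : R) (e : Echoice) (b : C) :
  exists c0 c1, forall w, Eval p (1 - p) e w b =
    Cmult (Cplus c0 (Cmult c1 w)) (Cinv (Cplus (RtoC p) (Cmult (Cminus (Cmult (RtoC (1 - p)) b) (RtoC 1)) w))).
Proof.
  assert (HD : forall w, Dden p (1 - p) w b
                         = Cplus (RtoC p) (Cmult (Cminus (Cmult (RtoC (1 - p)) b) (RtoC 1)) w))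
    by (intros w; unfold Dden; change_to_C; ring).
  destruct e; simpl; unfold S_f, P_f, Q_f, T_f, Cdiv.
  - exists (Copp (Cminus (RtoC p) b)), (Copp (Cmult (RtoC (1 - p)) b)).
    intros w. rewrite HD. change_to_C. ring.
  - exists (Cmult (RtoC p) (Cminus b (RtoC 1))), (Copp (Cmult (RtoC (1 - p)) (Cminus b (RtoC 1)))).
    intros w. rewrite HD. change_to_C. ring.
  - exists (Copp (Cminus (RtoC p) (Cmult (RtoC (1 - p)) b))), (Cminus (RtoC p) (Cmult (RtoC (1 - p)) b)).
    intros w. rewrite HD. change_to_C. ring.
  - exists (Cmult (RtoC p) b), (Copp (RtoC p)).
    intros w. rewrite HD. change_to_C. ring.
  - exists (Cmult (RtoC (1 - p)) b), (Copp (RtoC (1 - p))).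
    intros w. rewrite HD. change_to_C. ring.
  - exists (RtoC 0), (RtoC 0). intros w. change_to_C. ring.
Qed.

Lemma poly_approx_Eval (p r : R) (e : Echoice) (b : C) :
  0 < p < 1 -> 0 <= r -> (1 - p) * (r * r) + r < p -> Cmod b = r ->
  poly_approx r (fun w => Eval p (1 - p) e w b).
Proof.
  intros Hp Hr Hq Hb. destruct (Eval_affine_ratio p e b) as [c0 [c1 Hratio]].
  eapply poly_approx_ext; [|intros w _; symmetry; apply Hratio].
  apply poly_approx_mul; [exact Hr | |].
  - apply poly_approx_add; [apply poly_approx_const |].
    apply poly_approx_mul; [exact Hr | apply poly_approx_const | apply poly_approx_id].
  - apply poly_approx_inv_affine; [exact Hr|].
    rewrite Cmod_R, Rabs_pos_eq by lra.
    assert (Hd : Cmod (Cminus (Cmult (RtoC (1 - p)) b) (RtoC 1)) <= (1 - p) * r + 1).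
    { eapply Rle_trans; [apply Cmod_sub_le|].
      rewrite Cmod_mult, Cmod_R, Rabs_pos_eq, Hb, Cmod_1 by lra. lra. }
    apply Rle_lt_trans with (((1 - p) * r + 1) * r); [apply Rmult_le_compat_r; assumption | nra].
Qed.

Lemma identity_or_first_moved (N : nat) (sigma : nat -> nat) :
  (forall i, (i < N)%nat -> sigma i = i) \/
  exists m, (m < N)%nat /\ sigma m <> m /\ forall i, (i < m)%nat -> sigma i = i.
Proof.
  induction N as [|N [Hid | Hmoved]].
  - left. intros i Hi. lia.
  - destruct (Nat.eq_dec (sigma N) N) as [HN | HN].
    + left. intros i Hi. destruct (Nat.eq_dec i N); [subst; exact HN | apply Hid; lia].
    + right. exists N. auto.
  - right. destruct Hmoved as [m [Hm Hrest]]. exists m. split; [lia | exact Hrest].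
Qed.

Section FirstMovedPoint.
Variables (p r : R) (N m : nat) (X Y : nat -> Z) (sigma : nat -> nat) (E : nat -> nat -> Echoice).
Hypothesis Hp : 0 < p < 1.
Hypothesis Hr : 0 < r.
Hypothesis Hq : (1 - p) * (r * r) + r < p.
Hypothesis HX : forall i j, (i < j < N)%nat -> (X i < X j)%Z.
Hypothesis HXY : forall i, (i < N)%nat -> (Y i <= X i)%Z.
Hypothesis Hperm : is_perm N sigma.
Hypothesis HmN : (m < N)%nat.
Hypothesis Hmoved : sigma m <> m.
Hypothesis Hfixed : forall i, (i < m)%nat -> sigma i = i.

Lemma first_moved_le_image (i : nat) : (m <= i < N)%nat -> (m <= sigma i)%nat.
Proof.
  intros Hi. destruct Hperm as [Hrange Hinj].
  destruct (Nat.lt_ge_cases (sigma i) m) as [Hlt | Hge]; [exfalso | exact Hge].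
  assert (Hfix : sigma (sigma i) = sigma i) by (apply Hfixed, Hlt).
  assert (sigma i = i) by (apply Hinj; [apply Hrange; lia | lia | exact Hfix]).
  lia.
Qed.

Lemma first_moved_le_inversion (i j : nat) :
  (i < j < N)%nat -> (sigma j < sigma i)%nat -> (m <= sigma j)%nat.
Proof.
  intros Hij Hinv. destruct (Nat.lt_ge_cases j m) as [Hj | Hj].
  - rewrite (Hfixed j Hj), (Hfixed i ltac:(lia)) in Hinv. lia.
  - apply first_moved_le_image. lia.
Qed.

Lemma first_moved_exponent_nonneg (i : nat) :
  (i < N)%nat -> sigma i = m -> (0 <= X i - Y m - 1)%Z.
Proof.
  intros Hi Hsi.
  assert (Hmi : (m < i)%nat).
  { destruct (Nat.lt_total i m) as [Hlt | [Heq | Hgt]]; [| subst i; contradiction | exact Hgt].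
    rewrite Hfixed in Hsi by exact Hlt. lia. }
  pose proof (HX m i ltac:(lia)). pose proof (HXY m HmN). lia.
Qed.

Lemma integrand_mix_first_moved (xi env : nat -> C) :
  integrand p N X Y sigma E (mix m xi env) =
  Cmult (Cprod (map (fun i => Cpowz (xi i) (X i - Y i - 1)%Z) (seq 0 m)))
        (integrand_tail p N m X Y sigma E env).
Proof.
  unfold integrand, integrand_tail.
  replace (seq 0 N) with (seq 0 m ++ seq m (N - m))
    by (rewrite <- seq_app; f_equal; lia).
  rewrite map_app, Cprod_app.
  rewrite (inv_prod_ext N sigma _ (fun b a => Eval p (1 - p) (E b a) (env a) (env b))).
  2: { intros i j Hij Hinv. unfold mix. pose proof (first_moved_le_inversion i j Hij Hinv).
       destruct (Nat.ltb_spec (sigma j) m), (Nat.ltb_spec (sigma i) m); auto; lia. }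
  rewrite (map_ext_in _ (fun i => Cpowz (xi i) (X i - Y i - 1)%Z) (seq 0 m)).
  2: { intros i Hi. apply in_seq in Hi. unfold mix. rewrite Hfixed by lia.
       destruct (Nat.ltb_spec i m); [reflexivity | lia]. }
  rewrite (map_ext_in _ (fun i => Cpowz (env (sigma i)) (X i - Y (sigma i) - 1)%Z) (seq m (N - m))).
  2: { intros i Hi. apply in_seq in Hi. unfold mix. pose proof (first_moved_le_image i ltac:(lia)).
       destruct (Nat.ltb_spec (sigma i) m); [lia | reflexivity]. }
  change_to_C. ring.
Qed.

Lemma poly_approx_integrand_tail (env : nat -> C) :
  (forall k, (S m <= k)%nat -> Cmod (env k) = r) ->
  poly_approx r (fun w => integrand_tail p N m X Y sigma E (fun k => if Nat.eqb k m then w else env k)).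
Proof.
  intros Henv. unfold integrand_tail. apply poly_approx_mul; [lra | |].
  - apply (poly_approx_inv_prod r ltac:(lra) N sigma (fun b a w =>
      Eval p (1 - p) (E b a) (if Nat.eqb a m then w else env a) (if Nat.eqb b m then w else env b))).
    intros i j Hij Hinv. pose proof (first_moved_le_inversion i j Hij Hinv).
    destruct (Nat.eqb_spec (sigma i) m); [lia|].
    destruct (Nat.eqb_spec (sigma j) m); [|apply poly_approx_const].
    apply poly_approx_Eval; [exact Hp | lra | exact Hq | apply Henv; lia].
  - apply (poly_approx_Cprod_map r ltac:(lra) (seq m (N - m)) (fun i w =>
      Cpowz (if Nat.eqb (sigma i) m then w else env (sigma i)) (X i - Y (sigma i) - 1)%Z)).
    intros i Hi. apply in_seq in Hi.
    destruct (Nat.eqb_spec (sigma i) m) as [Hsi | Hsi]; [|apply poly_approx_const].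
    rewrite Hsi. pose proof (first_moved_exponent_nonneg i ltac:(lia) Hsi) as Hexp.
    apply (poly_approx_ext r (fun w => Cpow w (Z.to_nat (X i - Y m - 1)))); [apply poly_approx_pow; lra|].
    intros w _. unfold Cpowz. destruct (Z.leb_spec 0 (X i - Y m - 1)); [reflexivity | lia].
Qed.

Lemma iter_circ_integrand_first_moved (env : nat -> C) :
  (forall k, (S m <= k)%nat -> Cmod (env k) = r) ->
  iter_circ r (S m) (fun xi => integrand p N X Y sigma E (mix (S m) xi env)) = RtoC 0.
Proof.
  intros Henv. rewrite iter_circ_mix_S.
  set (power i z := Cpowz z (X i - Y i - 1)%Z).
  set (K := Cprod (map (fun i => circ_int r (power i)) (seq 0 m))).
  set (G w := integrand_tail p N m X Y sigma E (fun k => if Nat.eqb k m then w else env k)).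
  transitivity (circ_int r (fun z => Cmult K (G z))).
  - f_equal. apply functional_extensionality. intros z.
    unfold K. rewrite <- (iter_circ_separable r power (fun i => ex_RInt_circ_Cpowz r _ ltac:(lra))).
    f_equal. apply functional_extensionality. intros xi.
    apply integrand_mix_first_moved.
  - rewrite (circ_int_Cmult_l r K G (RtoC 0)); [change_to_C; ring|].
    apply is_RInt_circ_poly_approx; [exact Hr|].
    apply poly_approx_integrand_tail, Henv.
Qed.

End FirstMovedPoint.

Lemma radius_bound (p r : R) :
  0 < p < 1 -> 0 < r < (-1 + sqrt (1 + 4 * p * (1 - p))) / (2 * (1 - p)) ->
  (1 - p) * (r * r) + r < p.
Proof.
  intros Hp [Hr0 Hr1].
  assert (Hsqrt : 2 * (1 - p) * r + 1 < sqrt (1 + 4 * p * (1 - p))).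
  { apply (Rmult_lt_compat_r (2 * (1 - p))) in Hr1; [|lra].
    unfold Rdiv in Hr1. rewrite Rmult_assoc, Rinv_l, Rmult_1_r in Hr1 by lra. lra. }
  assert (Hsq : (2 * (1 - p) * r + 1) ^ 2 < 1 + 4 * p * (1 - p)).
  { apply sqrt_lt_0_alt. rewrite sqrt_pow2 by nra. exact Hsqrt. }
  nra.
Qed.

Theorem mainTheorem5 (p r : R) (N : nat) (X Y : nat -> Z) (sigma : nat -> nat)
  (E : nat -> nat -> Echoice) :
  0 < p < 1 ->
  0 < r < (-1 + sqrt (1 + 4 * p * (1 - p))) / (2 * (1 - p)) ->
  (forall i j, (i < j < N)%nat -> (X i < X j)%Z) ->
  (forall i j, (i < j < N)%nat -> (Y i < Y j)%Z) ->
  (forall i, (i < N)%nat -> (Y i <= X i)%Z) ->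
  is_perm N sigma ->
  (exists i, (i < N)%nat /\ sigma i <> i) ->
  iter_circ r N (fun xi =>
    Cmult
      (inv_prod N sigma (fun b a => Eval p (1 - p) (E b a) (xi a) (xi b)))
      (Cprod (map (fun i => Cpowz (xi (sigma i)) (X i - Y (sigma i) - 1)%Z)
                  (seq 0 N))))
  = RtoC 0.
Proof.
  intros Hp Hr HX _ HXY Hperm [i0 [Hi0 Hmoved0]].
  pose proof (radius_bound p r Hp Hr) as Hq.
  destruct (identity_or_first_moved N sigma) as [Hid | [m [HmN [Hmoved Hfixed]]]].
  { exfalso. exact (Hmoved0 (Hid i0 Hi0)). }
  change (iter_circ r N (integrand p N X Y sigma E) = RtoC 0).
  transitivity (iter_circ r N (fun xi => integrand p N X Y sigma E (mix N xi (fun _ => circ_pt r 0)))).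
  { f_equal. apply functional_extensionality. intros xi.
    symmetry. apply integrand_mix, (proj1 Hperm). }
  apply (iter_circ_mix_eq0 r _ (S m)); [lra | | lia | intros k _; apply Cmod_circ_pt; lra].
  intros env Henv.
  apply iter_circ_integrand_first_moved; (assumption || lra).
Qed.
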